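(* Let $A$ be an $n\times n$ ASM and let $z_n=(n,n-1,\ldots,2,1)^T$. If $z_n^TA=z_n^TP$ for some $n\times n$ permutation matrix $P$, then $A=P$.
   Context: An $n\times n$ alternating sign matrix (ASM) is an $n\times n$ matrix with entries in $\{0,1,-1\}$ such that in every row and column the nonzeros alternate in sign, beginning and ending with $+1$. *)

From HB Require Import structures.
From mathcomp Require Import all_boot all_order all_algebra all_fingroup.
Set Implicit Arguments. Unset Strict Implicit. Unset Printing Implicit Defensive.
Import Order.TTheory GRing.Theory Num.Theory.
Local Open Scope ring_scope.

(* A sequence of integers "alternates in sign, beginning and ending with +1":
   the subsequence of its nonzero entries is nonempty, starts with 1, ends
   with 1, and consecutive nonzero entries have opposite signs (+1,-1). *)
Definition alt_sign_seq (s : seq int) : bool :=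
  let t := [seq x <- s | x != 0] in
  [&& all (fun x => (x == 0) || (x == 1) || (x == -1)) s,
      head 0 t == 1, last 0 t == 1 &
      sorted (fun x y => y == - x) t].

Definition is_ASM (n : nat) (A : 'M[int]_n) : bool :=
  [forall i : 'I_n, alt_sign_seq [seq A i j | j <- enum 'I_n]] &&
  [forall j : 'I_n, alt_sign_seq [seq A i j | i <- enum 'I_n]].

(* z_n = (n, n-1, ..., 1)^T, as a row vector z_n^T : entry j (0-based) is n - j. *)
Definition z_vec (n : nat) : 'rV[int]_n := \row_(j < n) (n - j)%:R.

From HB Require Import structures.
From mathcomp Require Import all_boot all_order all_algebra all_fingroup.
Set Implicit Arguments. Unset Strict Implicit. Unset Printing Implicit Defensive.
Import GRing.Theory Num.Theory.
Local Open Scope ring_scope.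

(* Permute the columns of A by s and let c_k(t) be the sum of the first k
   entries of column t.  Along a column of an ASM the partial sums stay in
   [0,1], and the unit row sums give sum_t c_k(t) = k.  As z_i counts the
   k <= n with i < k, the hypothesis says sum_k c_k(t) = n - t = sum_k [t < k].
   So the deficits d_k(t) = [t < k] - c_k(t) have nonnegative prefix sums in t
   which add up to zero over k; hence all of them vanish, c_k(t) = [t < k],
   and the permuted matrix is the identity. *)

(* [c] is the partial sum preceding [s]; the next nonzero entry is (-1)^c. *)
Lemma alt_sign_running_sum (c : bool) (s : seq int) k :
  sorted (fun x y => y == - x) [seq x <- s | x != 0] ->
  head ((-1) ^+ c) [seq x <- s | x != 0] = (-1) ^+ c ->
  c%:R + \sum_(x <- take k s) x =
    (last ((-1) ^+ ~~ c) [seq x <- take k s | x != 0] == 1)%:R.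
Proof.
elim: s c k => [|x s IHs] c [|k] /=; rewrite ?big_nil ?addr0; try by case: c.
rewrite big_cons; have [-> /= sorted_s head_s|nz_x /= path_s head_x] := eqVneq x 0.
  by rewrite add0r IHs.
have sorted_s := path_sorted path_s.
have head_s : head ((-1) ^+ ~~ c) [seq y <- s | y != 0] = (-1) ^+ ~~ c.
  move: path_s; case: [seq y <- s | y != 0] => //= y t /andP[/eqP -> _].
  by rewrite head_x signrN.
rewrite addrA (_ : c%:R + x = (~~ c)%:R); last by rewrite head_x; case: (c).
by rewrite (IHs _ _ sorted_s head_s) negbK head_x.
Qed.

Lemma alt_sign_seq_prefix_sum s k : alt_sign_seq s ->
  \sum_(x <- take k s) x = (last (-1) [seq x <- take k s | x != 0] == 1)%:R.
Proof.
case/and4P=> _ head_s _ sorted_s; rewrite -[LHS]add0r.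
apply: (alt_sign_running_sum (c := false)) => //.
by case: [seq x <- s | x != 0] head_s => //= x t /eqP.
Qed.

Lemma alt_sign_seq_prefix_sum_ge0_le1 s k : alt_sign_seq s ->
  0 <= \sum_(x <- take k s) x <= 1.
Proof. by move/alt_sign_seq_prefix_sum->; case: (_ == _). Qed.

Lemma alt_sign_seq_sum s : alt_sign_seq s -> \sum_(x <- s) x = 1.
Proof.
move=> alt_s; rewrite -(take_size s) alt_sign_seq_prefix_sum // take_size.
by case/and4P: alt_s => _; case: [seq x <- s | x != 0] => //= x t _ ->.
Qed.

Section PrefixSum.
Variables (R : numDomainType) (n : nat).
Implicit Types (F G : 'I_n -> R) (k m : nat).

Definition prefix_sum F k := \sum_(i < n | (i < k)%N) F i.

Lemma prefix_sumS F (k : 'I_n) : prefix_sum F k.+1 = prefix_sum F k + F k.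
Proof.
rewrite /prefix_sum (bigD1 k) //= addrC; congr (_ + _).
by apply: eq_bigl => i; rewrite ltnS ltn_neqAle andbC.
Qed.

Lemma prefix_sumB F G k :
  prefix_sum (fun i => F i - G i) k = prefix_sum F k - prefix_sum G k.
Proof. exact: sumrB. Qed.

Lemma prefix_sum_le_sum F k : (forall i, 0 <= F i) -> prefix_sum F k <= \sum_i F i.
Proof.
move=> F_ge0; rewrite [leRHS](bigID (fun i : 'I_n => (i < k)%N)) /= lerDl.
exact: sumr_ge0.
Qed.

Lemma prefix_sum_eq0 F : (forall k, (k <= n)%N -> prefix_sum F k = 0) -> F =1 (fun=> 0).
Proof.
move=> prefix0 i; have := prefix_sumS F i.
by rewrite !prefix0 ?(ltnW (ltn_ord i)) // add0r => <-.
Qed.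

Lemma prefix_sum1 k : (k <= n)%N -> prefix_sum (fun=> 1) k = k%:R.
Proof.
by move=> le_kn; rewrite /prefix_sum -(big_ord_widen _ (fun=> 1)) // sumr_const card_ord.
Qed.

Lemma prefix_sum_indicator k m : (m <= n)%N ->
  prefix_sum (fun t => (t < k)%N%:R) m = (minn m k)%:R.
Proof.
move=> le_mn; rewrite -prefix_sum1 ?geq_min ?le_mn // /prefix_sum.
rewrite [RHS](eq_bigl (fun t : 'I_n => (t < m)%N && (t < k)%N)) => [|t]; last first.
  by rewrite leq_min.
by rewrite big_mkcondr; apply: eq_bigr => t _; case: ltnP.
Qed.

Lemma sum_indicator_ltn i : \sum_(k < n.+1) ((i < k)%N%:R : R) = (n - i)%:R.
Proof.
rewrite (eq_bigr (fun k : 'I_n.+1 => if (i < k)%N then 1 else 0 : R)) => [|k _].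
  2: by case: ltnP.
rewrite -big_mkcond (eq_bigl (fun k : 'I_n.+1 => xpredT (k : nat) && (i.+1 <= k)%N)) //.
by rewrite -(big_geq_mkord _ _ xpredT (fun=> 1)) sumr_const_nat subSS.
Qed.

End PrefixSum.

Section PrefixBoundedMatrix.
Variables (R : numDomainType) (n : nat) (B : 'M[R]_n).
Hypothesis col_prefix_sum_ge0_le1 :
  forall t k, (k <= n)%N -> 0 <= prefix_sum (B^~ t) k <= 1.
Hypothesis row_sum1 : forall i, \sum_t B i t = 1.
Hypothesis weighted_col_sum :
  forall t : 'I_n, \sum_(i < n) (n - i)%:R * B i t = (n - t)%:R.

Lemma sum_col_prefix_sum k : (k <= n)%N -> \sum_t prefix_sum (B^~ t) k = k%:R.
Proof.
move=> le_kn; rewrite /prefix_sum exchange_big /=.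
under eq_bigr do rewrite row_sum1.
exact: prefix_sum1.
Qed.

Lemma sum_prefix_sum_col t : \sum_(k < n.+1) prefix_sum (B^~ t) k = (n - t)%:R.
Proof.
rewrite -weighted_col_sum; under eq_bigr do rewrite /prefix_sum big_mkcond /=.
rewrite exchange_big /=; apply: eq_bigr => i _.
rewrite -sum_indicator_ltn mulr_suml; apply: eq_bigr => k _.
by case: ltnP; rewrite ?mul1r ?mul0r.
Qed.

Let deficit k (t : 'I_n) : R := (t < k)%N%:R - prefix_sum (B^~ t) k.

Lemma prefix_sum_deficit_ge0 k m : (k <= n)%N -> (m <= n)%N ->
  0 <= prefix_sum (deficit k) m.
Proof.
move=> le_kn le_mn; rewrite prefix_sumB subr_ge0 prefix_sum_indicator //.
have [le_mk|lt_km] := leqP m k.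
  rewrite -(prefix_sum1 R le_mn); apply: ler_sum => t _.
  by case/andP: (col_prefix_sum_ge0_le1 t le_kn).
rewrite -sum_col_prefix_sum //.
by apply: prefix_sum_le_sum => t; case/andP: (col_prefix_sum_ge0_le1 t le_kn).
Qed.

Lemma sum_deficit_eq0 (t : 'I_n) : \sum_(k < n.+1) deficit k t = 0.
Proof. by rewrite sumrB sum_indicator_ltn sum_prefix_sum_col subrr. Qed.

Lemma col_prefix_sum_indicator t k : (k <= n)%N -> prefix_sum (B^~ t) k = (t < k)%N%:R.
Proof.
move=> le_kn; apply/eqP; rewrite eq_sym -subr_eq0; apply/eqP; move: t.
apply: prefix_sum_eq0 => m le_mn.
have sum_prefix0 : \sum_(k < n.+1) prefix_sum (deficit k) m = 0.
  by rewrite /prefix_sum exchange_big big1 // => t _; apply: sum_deficit_eq0.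
apply: (psumr_eq0P _ sum_prefix0 (i := Ordinal (le_kn : (k < n.+1)%N))) => // k' _.
exact: prefix_sum_deficit_ge0 (ltn_ord k') le_mn.
Qed.

Lemma prefix_bounded_zfixed_mx_eq1 : B = 1%:M.
Proof.
apply/matrixP => i t; rewrite mxE; have := prefix_sumS (B^~ t) i.
rewrite !col_prefix_sum_indicator ?(ltnW (ltn_ord i)) //.
move=> /eqP; rewrite addrC -subr_eq => /eqP <-.
by rewrite ltnS -val_eqE /=; case: ltngtP; rewrite ?subrr ?subr0.
Qed.

End PrefixBoundedMatrix.

Lemma take_enum_ord n k : (k <= n)%N ->
  take k (enum 'I_n) = [seq i : 'I_n <- enum 'I_n | (i < k)%N].
Proof.
move=> le_kn; apply: (inj_map val_inj).
rewrite map_take val_enum_ord take_iota (minn_idPl le_kn).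
by rewrite -(filter_iota_ltn 0 le_kn) -val_enum_ord filter_map.
Qed.

Lemma sum_take_enum_ord (R : numDomainType) n (F : 'I_n -> R) k : (k <= n)%N ->
  \sum_(x <- take k [seq F i | i <- enum 'I_n]) x = prefix_sum F k.
Proof.
by move=> le_kn; rewrite -map_take big_map take_enum_ord // big_filter big_enum_cond.
Qed.

Lemma ASM_col_prefix_sum_ge0_le1 n (A : 'M[int]_n) j k : is_ASM A -> (k <= n)%N ->
  0 <= prefix_sum (A^~ j) k <= 1.
Proof.
case/andP=> _ /forallP/(_ j) alt_col le_kn.
by rewrite -sum_take_enum_ord //; apply: alt_sign_seq_prefix_sum_ge0_le1.
Qed.

Lemma ASM_row_sum n (A : 'M[int]_n) i : is_ASM A -> \sum_j A i j = 1.
Proof. by case/andP=> /forallP/(_ i)/alt_sign_seq_sum <- _; rewrite big_map big_enum. Qed.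

Theorem mainTheorem8 (n : nat) (A : 'M[int]_n) (s : 'S_n) :
  is_ASM A -> z_vec n *m A = z_vec n *m perm_mx s -> A = perm_mx s.
Proof.
move=> asmA zA.
have zAs : z_vec n *m col_perm s A = z_vec n.
  by rewrite col_permE mulmxA zA -mulmxA -perm_mxM mulgV perm_mx1 mulmx1.
have : col_perm s A = 1%:M.
  apply: prefix_bounded_zfixed_mx_eq1 => [t k le_kn | i | t].
  - rewrite /prefix_sum; under eq_bigr do rewrite mxE.
    exact: ASM_col_prefix_sum_ge0_le1.
  - under eq_bigr do rewrite mxE.
    by rewrite -(ASM_row_sum i asmA) [RHS](reindex_perm s).
  - have := congr1 (fun z : 'rV_n => z 0 t) zAs; rewrite !mxE => <-.
    by apply: eq_bigr => i _; rewrite !mxE.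
rewrite col_permE => AsV1.
by rewrite -[A]mulmx1 -perm_mx1 -(mulVg s) perm_mxM mulmxA AsV1 mul1mx.
Qed.
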